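(* Let $U,V$ be disjoint finite sets, ${\bf s}\in\mathbb N^U$, ${\bf t}\in\mathbb N^V$, ${\bf d}=({\bf s},{\bf t})$, and let $\mathcal B({\bf s},{\bf t})$ be a uniformly random bipartite graph on $U\cup V$ with degree sequence ${\bf d}$. Let $H_1,H_2$ be two edge-disjoint bipartite graphs on $U\cup V$ with ${\bf d}^{H_1}\le{\bf d}$ componentwise, and let $uv\in(U\times V)\setminus(H_1\cup H_2)$. Define \[\xi=\frac{J({\bf d})+\Delta({\bf d})(1+\Delta(H_2))+(d_u-d_u^{H_1})(d_v-d_v^{H_1})}{M-e(H_1)}+\frac{e(H_2)\Delta({\bf s})\Delta({\bf t})}{(M-e(H_1))^2}.\] If $\xi=o(1)$, then \[\mathbb P\big(uv\in\mathcal B({\bf s},{\bf t})\,\big|\,H_1\subseteq\mathcal B({\bf s},{\bf t}),\ H_2\cap\mathcal B({\bf s},{\bf t})=\emptyset\big)=\frac{(d_u-d_u^{H_1})(d_v-d_v^{H_1})}{M-e(H_1)}\big(1+O(\xi)\big).\]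
   Context: $d_w$ denotes the prescribed degree of vertex $w$ (so $d_w=s_w$ for $w\in U$, $d_w=t_w$ for $w\in V$), ${\bf d}^{H}$ and $d^{H}_w$ denote the degree sequence of $H$ and the degree of $w$ in $H$, $e(H)$ and $\Delta(H)$ the number of edges and maximum degree of $H$, and $\Delta(\cdot)$ of a sequence its maximum entry. With entries ordered decreasingly, $s_1\ge s_2\ge\cdots$ and $t_1\ge t_2\ge\cdots$, $M=M({\bf d})=\sum_{u\in U}s_u=\sum_{v\in V}t_v$ and $J({\bf d})=\sum_{i=1}^{s_1}t_i+\sum_{j=1}^{t_1}s_j$. *)

From HB Require Import structures.
From mathcomp Require Import all_boot all_order all_algebra.
From mathcomp Require Import reals.
Set Implicit Arguments. Unset Strict Implicit. Unset Printing Implicit Defensive.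
Import Order.TTheory GRing.Theory Num.Theory.

Section Bip.
Variables U V : finType.

Definition degU (G : {set U * V}) (u : U) : nat := #|[set v : V | (u, v) \in G]|.
Definition degV (G : {set U * V}) (v : V) : nat := #|[set u : U | (u, v) \in G]|.

Definition realizes (s : U -> nat) (t : V -> nat) (G : {set U * V}) : bool :=
  [forall u, degU G u == s u] && [forall v, degV G v == t v].

Definition maxf (T : finType) (f : T -> nat) : nat := \max_(x : T) f x.

Definition Delta_d (s : U -> nat) (t : V -> nat) : nat := maxn (maxf s) (maxf t).

Definition Delta_H (G : {set U * V}) : nat :=
  maxn (maxf (degU G)) (maxf (degV G)).

Definition Msum (s : U -> nat) : nat := \sum_(u : U) s u.

Definition sorted_desc (T : finType) (f : T -> nat) : seq nat :=
  sort geq [seq f x | x <- enum T].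

(* J(d) = sum_{i=1}^{s_1} t_i + sum_{j=1}^{t_1} s_j *)
Definition Jd (s : U -> nat) (t : V -> nat) : nat :=
  sumn (take (maxf s) (sorted_desc t)) + sumn (take (maxf t) (sorted_desc s)).

Definition cond_space (s : U -> nat) (t : V -> nat) (H1 H2 : {set U * V}) :
  {set {set U * V}} :=
  [set G : {set U * V} | [&& realizes s t G, H1 \subset G & H2 :&: G == set0]].

Variable R : realType.

(* P(uv ∈ B(s,t) | H1 ⊆ B(s,t), H2 ∩ B(s,t) = ∅) for the uniform measure *)
Definition cond_prob (s : U -> nat) (t : V -> nat) (H1 H2 : {set U * V})
  (u : U) (v : V) : R :=
  (#|[set G in cond_space s t H1 H2 | (u, v) \in G]|%:R
     / #|cond_space s t H1 H2|%:R)%R.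

Definition xi (s : U -> nat) (t : V -> nat) (H1 H2 : {set U * V})
  (u : U) (v : V) : R :=
  ((Jd s t + Delta_d s t * (1 + Delta_H H2)
     + (s u - degU H1 u) * (t v - degV H1 v))%:R / (Msum s - #|H1|)%:R
   + (#|H2| * maxf s * maxf t)%:R / ((Msum s - #|H1|) ^ 2)%:R)%R.

Definition main_term (s : U -> nat) (t : V -> nat) (H1 : {set U * V})
  (u : U) (v : V) : R :=
  (((s u - degU H1 u) * (t v - degV H1 v))%:R / (Msum s - #|H1|)%:R)%R.

End Bip.

From HB Require Import structures.
From mathcomp Require Import all_boot all_order all_algebra.
From mathcomp Require Import reals.
From mathcomp Require Import zify ring lra.
Set Implicit Arguments. Unset Strict Implicit. Unset Printing Implicit Defensive.
Import Order.TTheory GRing.Theory Num.Theory.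

(* Split the conditional space into the graphs A that contain uv
   and the graphs B that do not; put m = M - e(H1), a = d_u - d_u^{H1} and
   b = d_v - d_v^{H1}. A forward switching of G in A trades uv and two edges
   x1y1, x2y2 of G outside H1 for the pairs uy1, x2v, x1y2; it stays in the
   conditional space as soon as the new pairs avoid G and H2 and the vertices
   are distinct, and the backward switchings of B are exactly the inverse
   operations. Every G in A has at most m^2 and at least
   m^2 - O(m K + e(H2) Δ(s) Δ(t)) forward switchings, where
   K = J(d) + Δ(d)(1 + Δ(H2)) + ab, because the at most Δ(d) neighbours of a
   vertex have total degree at most J(d); every G in B has at most abm
   and at least ab(m - O(K)) backward switchings. Double counting the
   switchings gives |A| m^2 = |B| abm (1 + O(ξ)), hence
   |A| / (|A| + |B|) = (ab/m)(1 + O(ξ)); explicitly ξ <= 1/12 and C = 12 work. *)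

Lemma sumn_take_succ (a k : nat) (l : seq nat) :
  all (fun z => z <= a) l -> sumn (take k.+1 l) <= a + sumn (take k l).
Proof.
elim: l k => [|z l IH] k //= /andP[za al].
case: k => [|k] /=; first by rewrite take0 /=; lia.
have := IH k al; lia.
Qed.

Lemma sumn_le_take_sorted (l : seq nat) : sorted geq l ->
  forall w r, perm_eq (w ++ r) l -> sumn w <= sumn (take (size w) l).
Proof.
elim: l => [|a l IH] Hs w r Hp.
  by move: (perm_size Hp); rewrite size_cat /=; case: w {Hp}.
have Hs' : sorted geq l by apply: (path_sorted Hs).
have Hall : all (fun z => z <= a) l.
  have := order_path_min (fun _ _ _ h1 h2 => leq_trans h2 h1) Hs.
  by apply: sub_all => z.
case Haw: (a \in w).
  have Hpw := perm_to_rem Haw.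
  have Hp2 : perm_eq (rem a w ++ r) l.
    rewrite -(perm_cons a); apply: perm_trans _ Hp.
    by rewrite -cat_cons perm_cat2r perm_sym.
  rewrite (perm_sumn Hpw) (perm_size Hpw) /=.
  by rewrite leq_add2l; apply: IH Hs' _ _ Hp2.
have Har : a \in r.
  have : a \in w ++ r by rewrite (perm_mem Hp) mem_head.
  by rewrite mem_cat Haw.
have Hp2 : perm_eq (w ++ rem a r) l.
  rewrite -(perm_cons a); apply: (perm_trans _ Hp); rewrite perm_sym.
  apply: (@perm_trans _ (w ++ a :: rem a r)); first by rewrite perm_cat2l perm_to_rem.
  by rewrite -cat1s perm_catCA.
have := IH Hs' _ _ Hp2.
case E: (size w) => [|k] Hw; first by move/eqP: E; rewrite size_eq0 => /eqP ->.
exact: (leq_trans Hw (sumn_take_succ k Hall)).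
Qed.

Lemma sum_le_sumn_take_sorted_desc (T : finType) (f : T -> nat) (S : {set T}) k :
  #|S| <= k -> \sum_(x in S) f x <= sumn (take k (sorted_desc f)).
Proof.
move=> Hk.
have Hsub : subseq (map f (enum S)) (map f (enum T)).
  apply: map_subseq; rewrite /enum_mem.
  apply: subseq_trans (filter_subseq _ _) _.
  by rewrite (@eq_filter _ _ predT) ?filter_predT.
have [r Hr] := perm_to_subseq Hsub.
have Hl : perm_eq (map f (enum S) ++ r) (sorted_desc f).
  by rewrite perm_sym /sorted_desc; apply: (perm_trans _ Hr); rewrite perm_sort.
have Hs : sorted geq (sorted_desc f).
  by apply: sort_sorted => x y; apply: leq_total.
have := sumn_le_take_sorted Hs Hl.
rewrite size_map -cardE -big_enum sumnE big_map => H.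
apply: (leq_trans H).
by rewrite -(subnKC Hk) takeD sumn_cat leq_addr.
Qed.

Lemma leq_maxf (T : finType) (f : T -> nat) x : f x <= maxf f.
Proof. exact: leq_bigmax. Qed.

Lemma sum_mem_mul (T : finType) (A : {set T}) (F : T -> nat) :
  \sum_(e in A) F e = \sum_e (e \in A) * F e.
Proof. by rewrite big_mkcond; apply: eq_bigr => e _; rewrite mulnbl. Qed.

Lemma card_sum_mem (T : finType) (A : {set T}) : #|A| = \sum_e (e \in A : nat).
Proof. by rewrite -sum1_card sum_mem_mul; apply: eq_bigr => e _; rewrite muln1. Qed.

Lemma card_sep_sum (T : finType) (A : {set T}) (P : pred T) :
  #|[set x in A | P x]| = \sum_(x in A) (P x : nat).
Proof.
rewrite card_sum_mem sum_mem_mul; apply: eq_bigr => x _; rewrite !inE.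
by case: (x \in A); case: (P x).
Qed.

Lemma card_sepUsepN (T : finType) (A : {set T}) (P : pred T) :
  #|A| = #|[set x in A | P x]| + #|[set x in A | ~~ P x]|.
Proof.
rewrite !card_sum_mem -big_split; apply: eq_bigr => x _; rewrite !inE.
by case: (x \in A); case: (P x).
Qed.

Lemma sum_set3 (T : finType) (a b c : T) (F : T -> nat) :
  a != b -> a != c -> b != c -> \sum_(e in [set a; b; c]) F e = F a + F b + F c.
Proof.
move=> ab ac bc; rewrite -setUA big_setU1 /=; last by rewrite !inE negb_or ab ac.
by rewrite big_setU1 /= ?big_set1 ?addnA // !inE bc.
Qed.

Lemma hasN_add_sumn_ge1 (l : seq bool) : 1 <= ~~ has id l + sumn (map nat_of_bool l).
Proof. elim: l => [|b l IH] //=; case: b => //=; lia. Qed.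

Section Incidence.
Variables U V : finType.
Implicit Types (X Y G R A : {set U * V}).

Lemma sum_pairE (F : U * V -> nat) : \sum_e F e = \sum_x \sum_y F (x, y).
Proof. by rewrite pair_bigA; apply: eq_bigr => -[]. Qed.

Lemma degUE X x : degU X x = \sum_y ((x, y) \in X).
Proof. by rewrite /degU card_sum_mem; apply: eq_bigr => y _; rewrite inE. Qed.

Lemma degVE X y : degV X y = \sum_x ((x, y) \in X).
Proof. by rewrite /degV card_sum_mem; apply: eq_bigr => x _; rewrite inE. Qed.

Lemma sum_edges_fst X (phi : U -> nat) :
  \sum_(e in X) phi e.1 = \sum_x degU X x * phi x.
Proof. by rewrite sum_mem_mul sum_pairE; apply: eq_bigr => x _; rewrite degUE big_distrl. Qed.

Lemma sum_edges_snd X (phi : V -> nat) :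
  \sum_(e in X) phi e.2 = \sum_y degV X y * phi y.
Proof.
rewrite sum_mem_mul sum_pairE exchange_big.
by apply: eq_bigr => y _; rewrite degVE big_distrl.
Qed.

Lemma degU_sum_edges X w : degU X w = \sum_(e in X) (e.1 == w : nat).
Proof.
rewrite (sum_edges_fst X (fun x => (x == w : nat))) (bigD1 w) //= eqxx muln1.
by rewrite big1 ?addn0 // => x /negbTE ->; rewrite muln0.
Qed.

Lemma degV_sum_edges X w : degV X w = \sum_(e in X) (e.2 == w : nat).
Proof.
rewrite (sum_edges_snd X (fun y => (y == w : nat))) (bigD1 w) //= eqxx muln1.
by rewrite big1 ?addn0 // => y /negbTE ->; rewrite muln0.
Qed.

Lemma card_edges X : #|X| = \sum_x degU X x.
Proof. by rewrite -sum1_card (sum_edges_fst X (fun _ => 1)); under eq_bigr do rewrite muln1. Qed.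

Lemma degU_setD X Y x : Y \subset X -> degU (X :\: Y) x = degU X x - degU Y x.
Proof.
move=> /subsetP sYX; rewrite !degUE; apply/eqP; rewrite -(eqn_add2r (\sum_y ((x, y) \in Y : nat))).
rewrite subnK; last by apply: leq_sum => y _; case E: (_ \in Y) => //; rewrite (sYX _ E).
rewrite -big_split; apply/eqP/eq_bigr => y _; rewrite !inE.
by case E: (_ \in Y) => /=; rewrite ?addn0 // (sYX _ E).
Qed.

Lemma degV_setD X Y y : Y \subset X -> degV (X :\: Y) y = degV X y - degV Y y.
Proof.
move=> /subsetP sYX; rewrite !degVE; apply/eqP; rewrite -(eqn_add2r (\sum_x ((x, y) \in Y : nat))).
rewrite subnK; last by apply: leq_sum => x _; case E: (_ \in Y) => //; rewrite (sYX _ E).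
rewrite -big_split; apply/eqP/eq_bigr => x _; rewrite !inE.
by case E: (_ \in Y) => /=; rewrite ?addn0 // (sYX _ E).
Qed.

Lemma sum_pairs_reorder (F : U -> V -> U -> V -> nat) :
  \sum_(e1 : U * V) \sum_(e2 : U * V) F e1.1 e1.2 e2.1 e2.2 =
  \sum_y1 \sum_x2 \sum_x1 \sum_y2 F x1 y1 x2 y2.
Proof.
transitivity (\sum_x1 \sum_y1 \sum_x2 \sum_y2 F x1 y1 x2 y2).
  by rewrite sum_pairE; apply: eq_bigr => x1 _; apply: eq_bigr => y1 _; rewrite sum_pairE.
by rewrite exchange_big; apply: eq_bigr => y1 _; rewrite exchange_big.
Qed.

Lemma degU_degV_card X x y : degU X x * degV X y * #|X| =
  \sum_y1 \sum_x2 \sum_x1 \sum_y2 (((x, y1) \in X) * ((x2, y) \in X) * ((x1, y2) \in X)).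
Proof.
rewrite degUE degVE card_sum_mem sum_pairE big_distrlr big_distrl.
apply: eq_bigr => y1 _; rewrite big_distrl; apply: eq_bigr => x2 _.
by rewrite big_distrr; apply: eq_bigr => x1 _; rewrite big_distrr.
Qed.

Definition switch G R A := G :\: R :|: A.

Lemma sum_switch G R A (F : U * V -> nat) :
  R \subset G -> (forall e, e \in A -> e \notin G) ->
  \sum_(e in switch G R A) F e + \sum_(e in R) F e = \sum_(e in G) F e + \sum_(e in A) F e.
Proof.
move=> /subsetP sRG dAG.
rewrite !sum_mem_mul -!big_split /=; apply: eq_bigr => e _; rewrite !inE.
case eR: (e \in R); case eG: (e \in G); case eA: (e \in A) => //=;
  rewrite ?mul0n ?mul1n ?add0n ?addn0 //.
- by have := sRG _ eR; rewrite eG.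
- by have := sRG _ eR; rewrite eG.
- by have := dAG e eA; rewrite eG.
Qed.

Lemma deg_switch G R A :
  R \subset G -> (forall e, e \in A -> e \notin G) ->
  (forall x, degU R x = degU A x) -> (forall y, degV R y = degV A y) ->
  (forall x, degU (switch G R A) x = degU G x) /\
  (forall y, degV (switch G R A) y = degV G y).
Proof.
move=> sRG dAG hU hV; split => w.
  have := sum_switch (fun e => (e.1 == w : nat)) sRG dAG.
  by rewrite -!degU_sum_edges hU => /addIn.
have := sum_switch (fun e => (e.2 == w : nat)) sRG dAG.
by rewrite -!degV_sum_edges hV => /addIn.
Qed.

Lemma switchK G R A :
  R \subset G -> (forall e, e \in A -> e \notin G) -> switch (switch G R A) A R = G.
Proof.
move=> /subsetP sRG dAG; apply/setP => e; rewrite !inE.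
case eR: (e \in R); case eG: (e \in G); case eA: (e \in A) => //=.
all: first [by have := sRG _ eR; rewrite eG | by have := dAG _ eA; rewrite eG].
Qed.

End Incidence.

Section RatioEstimate.
Local Open Scope ring_scope.

Lemma ratio_num_estimate (R : realFieldType) (nA nB m ab Ef Kb xi : R) :
  0 <= nA -> 0 <= nB -> 0 < m -> 0 <= ab -> 0 <= xi -> xi <= 1 / 12 ->
  nA * (m * m) <= nB * (ab * m) + nA * Ef ->
  nB * (ab * m) <= nA * (m * m) + nB * (ab * Kb) ->
  Ef <= 6 * xi * (m * m) -> Kb <= 4 * xi * m -> ab <= xi * m ->
  `|nA * m - ab * (nA + nB)| <= 12 * xi * (ab * (nA + nB)).
Proof.
move=> nA_ge0 nB_ge0 m_gt0 ab_ge0 xi_ge0 xi_small fwd_count bwd_count Ef_le Kb_le ab_le.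
have fwd1 : nA * m <= nB * ab + 6 * xi * (nA * m).
  rewrite -(ler_pM2r m_gt0).
  have : nA * Ef <= nA * (6 * xi * (m * m)) by apply: ler_wpM2l.
  by move: fwd_count; rewrite -!mulrA; lra.
have fwd2 : nA * m <= 2 * (nB * ab).
  have : 6 * xi * (nA * m) <= 1 / 2 * (nA * m).
    by apply: ler_wpM2r; [rewrite mulr_ge0 // ltW | lra].
  lra.
have bwd1 : nB * ab <= nA * m + 4 * xi * (nB * ab).
  rewrite -(ler_pM2r m_gt0).
  have : nB * (ab * Kb) <= nB * (ab * (4 * xi * m)) by rewrite !ler_wpM2l.
  by move: bwd_count; rewrite -!mulrA; lra.
have cross : ab * nA <= 2 * xi * (nB * ab).
  rewrite -(ler_pM2r m_gt0).
  have e1 : ab * (nA * m) <= xi * m * (nA * m).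
    by apply: ler_wpM2r => //; apply: mulr_ge0 => //; apply: ltW.
  have e2 : xi * m * (nA * m) <= xi * m * (2 * (nB * ab)).
    by apply: ler_wpM2l => //; apply: mulr_ge0 => //; apply: ltW.
  lra.
have nBab : nB * ab <= ab * (nA + nB).
  by rewrite mulrC; apply: ler_wpM2l => //; lra.
rewrite ler_norml; apply/andP; split.
- have : 4 * xi * (nB * ab) <= 4 * xi * (ab * (nA + nB)) by apply: ler_wpM2l; lra.
  have : 2 * xi * (nB * ab) <= 2 * xi * (ab * (nA + nB)) by apply: ler_wpM2l; lra.
  have : 0 <= xi * (ab * (nA + nB)) by rewrite !mulr_ge0 //; lra.
  lra.
- have : 12 * xi * (nB * ab) <= 12 * xi * (ab * (nA + nB)) by apply: ler_wpM2l; lra.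
  have : 0 <= ab * nA by apply: mulr_ge0.
  have : 6 * xi * (nA * m) <= 6 * xi * (2 * (nB * ab)) by apply: ler_wpM2l; lra.
  lra.
Qed.

Lemma ratio_estimate (R : realFieldType) (nA nB m ab Ef Kb X Y : R) :
  0 <= nA -> 0 <= nB -> 0 < nA + nB -> 0 < m -> 0 <= ab -> 0 <= X -> 0 <= Y ->
  nA * (m * m) <= nB * (ab * m) + nA * Ef ->
  nB * (ab * m) <= nA * (m * m) + nB * (ab * Kb) ->
  Ef <= 6 * (m * X + Y) -> Kb <= 4 * X -> ab <= X ->
  X / m + Y / (m * m) <= 1 / 12 ->
  `|nA / (nA + nB) - ab / m| <= 12 * (X / m + Y / (m * m)) * (ab / m).
Proof.
move=> hA hB hN hm hab hX hY h1 h2 hE hK habX.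
set xi := X / m + Y / (m * m) => hxi.
have m0 : m != 0 by rewrite gt_eqF.
have N0 : nA + nB != 0 by rewrite gt_eqF.
have xim : xi * (m * m) = X * m + Y by rewrite /xi; field.
have xi0 : 0 <= xi by rewrite /xi addr_ge0 ?divr_ge0 ?mulr_ge0 // ltW.
have Xm : X <= xi * m.
  by rewrite -(ler_pM2r hm) -mulrA xim; lra.
have Ef_le : Ef <= 6 * xi * (m * m) by rewrite -mulrA xim; lra.
have Kb_le : Kb <= 4 * xi * m by lra.
have num := ratio_num_estimate hA hB hm hab xi0 hxi h1 h2 Ef_le Kb_le (le_trans habX Xm).
have -> : nA / (nA + nB) - ab / m = (nA * m - ab * (nA + nB)) / ((nA + nB) * m).
  by field; rewrite m0 N0.
rewrite normrM normfV (gtr0_norm (mulr_gt0 hN hm)) ler_pdivrMr ?mulr_gt0 //.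
suff -> : 12 * xi * (ab / m) * ((nA + nB) * m) = 12 * xi * (ab * (nA + nB)) by [].
by field.
Qed.

End RatioEstimate.

Section Switching.
Variables (U V : finType) (s : U -> nat) (t : V -> nat) (H1 H2 : {set U * V}).
Variables (u : U) (v : V).
Hypothesis uv_notin_H1 : (u, v) \notin H1.
Hypothesis uv_notin_H2 : (u, v) \notin H2.
Implicit Types (G R A : {set U * V}) (x : U) (y : V).

Definition graphs_with_uv := [set G in cond_space s t H1 H2 | (u, v) \in G].
Definition graphs_without_uv := [set G in cond_space s t H1 H2 | (u, v) \notin G].

Lemma cond_spaceP G : G \in cond_space s t H1 H2 ->
  [/\ forall x, degU G x = s x, forall y, degV G y = t y, H1 \subset G &
      forall e, e \in H2 -> e \notin G].
Proof.
rewrite inE => /and3P[/andP[/forallP hu /forallP hv] h1 /eqP h2].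
split => // [x|y|e eH2]; [exact/eqP/hu | exact/eqP/hv |].
apply/negP => eG; have : e \in H2 :&: G by rewrite inE eH2 eG.
by rewrite h2 inE.
Qed.

Lemma cond_spaceI G : (forall x, degU G x = s x) -> (forall y, degV G y = t y) ->
  H1 \subset G -> (forall e, e \in H2 -> e \notin G) -> G \in cond_space s t H1 H2.
Proof.
move=> hu hv h1 h2; rewrite inE h1 /realizes.
apply/and3P; split => //; first by apply/andP; split; apply/forallP => z; apply/eqP.
apply/eqP/setP => e; rewrite !inE; apply/negP => /andP[e2 eG].
by have := h2 e e2; rewrite eG.
Qed.

Definition switch_out x1 y1 x2 y2 : {set U * V} := [set (u, v); (x1, y1); (x2, y2)].
Definition switch_in x1 y1 x2 y2 : {set U * V} := [set (u, y1); (x2, v); (x1, y2)].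

Definition fwd_bad G x1 y1 x2 y2 :=
  has id [:: (u, y1) \in G; (u, y1) \in H2; (x2, v) \in G; (x2, v) \in H2;
            (x1, y2) \in G; (x1, y2) \in H2; x2 == u; x1 == u; x2 == x1;
            y1 == v; y2 == v; y1 == y2].

Definition bwd_bad G x1 y1 x2 y2 :=
  has id [:: (x1, y1) \in G; (x1, y1) \in H2; (x2, y2) \in G; (x2, y2) \in H2;
            x2 == u; x1 == u; x2 == x1; y1 == v; y2 == v; y1 == y2].

Definition fwd_switchable G x1 y1 x2 y2 :=
  [&& (x1, y1) \in G, (x1, y1) \notin H1, (x2, y2) \in G, (x2, y2) \notin H1
    & ~~ fwd_bad G x1 y1 x2 y2].

Definition bwd_switchable G x1 y1 x2 y2 :=
  [&& (u, y1) \in G, (u, y1) \notin H1, (x2, v) \in G, (x2, v) \notin H1,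
      (x1, y2) \in G, (x1, y2) \notin H1 & ~~ bwd_bad G x1 y1 x2 y2].

Lemma deg_switch_out_in x1 y1 x2 y2 : x2 != u -> x1 != u -> x2 != x1 ->
  (forall x, degU (switch_out x1 y1 x2 y2) x = degU (switch_in x1 y1 x2 y2) x) /\
  (forall y, degV (switch_out x1 y1 x2 y2) y = degV (switch_in x1 y1 x2 y2) y).
Proof.
move=> n2u n1u n21.
have d1 : (u, v) != (x1, y1) by rewrite xpair_eqE negb_and eq_sym n1u.
have d2 : (u, v) != (x2, y2) by rewrite xpair_eqE negb_and eq_sym n2u.
have d3 : (x1, y1) != (x2, y2) by rewrite xpair_eqE negb_and eq_sym n21.
have d4 : (u, y1) != (x2, v) by rewrite xpair_eqE negb_and eq_sym n2u.
have d5 : (u, y1) != (x1, y2) by rewrite xpair_eqE negb_and eq_sym n1u.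
have d6 : (x2, v) != (x1, y2) by rewrite xpair_eqE negb_and n21.
split => w; rewrite ?degU_sum_edges ?degV_sum_edges /switch_out /switch_in !sum_set3 //=.
  exact: addnAC.
by rewrite (addnC (v == w)).
Qed.

Lemma switch_in_cond_space G R A :
  G \in cond_space s t H1 H2 -> R \subset G -> (forall e, e \in A -> e \notin G) ->
  (forall x, degU R x = degU A x) -> (forall y, degV R y = degV A y) ->
  (forall e, e \in R -> e \notin H1) -> (forall e, e \in A -> e \notin H2) ->
  switch G R A \in cond_space s t H1 H2.
Proof.
move=> GO sRG dAG bU bV RnH1 AnH2.
have [hu hv h1 h2] := cond_spaceP GO.
have [dU dV] := deg_switch sRG dAG bU bV.
apply: cond_spaceI => [x|y||e eH2]; [by rewrite dU hu | by rewrite dV hv | |].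
- apply/subsetP => e eH; rewrite /switch !inE (subsetP h1 _ eH) andbT.
  by rewrite (contraL (RnH1 e) eH).
- rewrite /switch !inE negb_or (negbTE (h2 e eH2)) andbF /=.
  exact: contraL (AnH2 e) eH2.
Qed.

Lemma fwd_switch_spec G x1 y1 x2 y2 :
  G \in graphs_with_uv -> fwd_switchable G x1 y1 x2 y2 ->
  let G' := switch G (switch_out x1 y1 x2 y2) (switch_in x1 y1 x2 y2) in
  [/\ G' \in graphs_without_uv, bwd_switchable G' x1 y1 x2 y2 &
      switch G' (switch_in x1 y1 x2 y2) (switch_out x1 y1 x2 y2) = G].
Proof.
rewrite inE => /andP[GO uvG] /and5P[e1G e1H e2G e2H nbad] G'.
move: nbad; rewrite /fwd_bad /=.
move=> /norP[/negbTE f1 /norP[/negbTE f2 /norP[/negbTE f3 /norP[/negbTE f4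
  /norP[/negbTE f5 /norP[/negbTE f6 /norP[f7 /norP[f8 /norP[f9
  /norP[/negbTE f10 /norP[/negbTE f11 /norP[/negbTE f12 _]]]]]]]]]]]].
have [_ _ h1 h2] := cond_spaceP GO.
have sRG : switch_out x1 y1 x2 y2 \subset G.
  by apply/subsetP => e; rewrite !inE => /orP[/orP[]|] /eqP ->.
have dAG e : e \in switch_in x1 y1 x2 y2 -> e \notin G.
  by rewrite !inE => /orP[/orP[]|] /eqP ->; rewrite ?f1 ?f3 ?f5.
have [bU bV] := deg_switch_out_in y1 y2 f7 f8 f9.
have G'E e : (e \in G') =
    (e \in switch_in x1 y1 x2 y2) || (e \notin switch_out x1 y1 x2 y2) && (e \in G).
  by rewrite /G' /switch !inE orbC.
have [n7 n8 n9] := And3 (negbTE f7) (negbTE f8) (negbTE f9).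
have [n7' n8' n9'] : [/\ (u == x2) = false, (u == x1) = false & (x1 == x2) = false].
  by split; rewrite eq_sym ?n7 ?n8 ?n9.
have [n10' n11' n12'] : [/\ (v == y1) = false, (v == y2) = false & (y2 == y1) = false].
  by split; rewrite eq_sym ?f10 ?f11 ?f12.
split; last exact: switchK.
- rewrite inE switch_in_cond_space //=.
  + by rewrite G'E negb_or !inE !xpair_eqE !eqxx /= n10' n7' n8'.
  + by move=> e; rewrite !inE => /orP[/orP[]|] /eqP ->.
  + by move=> e; rewrite !inE => /orP[/orP[]|] /eqP ->; rewrite ?f2 ?f4 ?f6.
- have nH1 e : e \notin G -> (e \in H1) = false.
    by move=> eG; apply: contraNF eG; apply: (subsetP h1).
  have nH2 e : e \in G -> (e \in H2) = false.
    by move=> eG; apply: contraTF eG; apply: h2.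
  rewrite /bwd_switchable /bwd_bad !G'E !inE !xpair_eqE !eqxx /=.
  rewrite ?f1 ?f3 ?f5 ?n7 ?n8 ?n9 ?f10 ?f11 ?f12 ?n7' ?n8' ?n9' ?n10' ?n11' ?n12' /=.
  by rewrite !nH1 ?f1 ?f3 ?f5 // !nH2.
Qed.

Lemma bwd_switch_spec G x1 y1 x2 y2 :
  G \in graphs_without_uv -> bwd_switchable G x1 y1 x2 y2 ->
  let G' := switch G (switch_in x1 y1 x2 y2) (switch_out x1 y1 x2 y2) in
  [/\ G' \in graphs_with_uv, fwd_switchable G' x1 y1 x2 y2 &
      switch G' (switch_out x1 y1 x2 y2) (switch_in x1 y1 x2 y2) = G].
Proof.
rewrite inE => /andP[GO uvG] /and5P[e1G e1H e2G e2H /and3P[e3G e3H nbad]] G'.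
move: nbad; rewrite /bwd_bad /=.
move=> /norP[/negbTE g1 /norP[/negbTE g2 /norP[/negbTE g3 /norP[/negbTE g4
  /norP[g5 /norP[g6 /norP[g7 /norP[/negbTE g8 /norP[/negbTE g9 /norP[/negbTE g10 _]]]]]]]]]].
have [_ _ h1 h2] := cond_spaceP GO.
have sRG : switch_in x1 y1 x2 y2 \subset G.
  by apply/subsetP => e; rewrite !inE => /orP[/orP[]|] /eqP ->.
have dAG e : e \in switch_out x1 y1 x2 y2 -> e \notin G.
  by rewrite !inE => /orP[/orP[]|] /eqP ->; rewrite ?g1 ?g3.
have [bU bV] := deg_switch_out_in y1 y2 g5 g6 g7.
have G'E e : (e \in G') =
    (e \in switch_out x1 y1 x2 y2) || (e \notin switch_in x1 y1 x2 y2) && (e \in G).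
  by rewrite /G' /switch !inE orbC.
have [n5 n6 n7] := And3 (negbTE g5) (negbTE g6) (negbTE g7).
have [n5' n6' n7'] : [/\ (u == x2) = false, (u == x1) = false & (x1 == x2) = false].
  by split; rewrite eq_sym ?n5 ?n6 ?n7.
have [n8' n9' n10'] : [/\ (v == y1) = false, (v == y2) = false & (y2 == y1) = false].
  by split; rewrite eq_sym ?g8 ?g9 ?g10.
split; last exact: switchK.
- rewrite inE switch_in_cond_space //=.
  + by rewrite G'E !inE !xpair_eqE !eqxx.
  + by move=> e; rewrite !inE => /orP[/orP[]|] /eqP ->.
  + by move=> e; rewrite !inE => /orP[/orP[]|] /eqP ->; rewrite ?g2 ?g4.
- have nH1 e : e \notin G -> (e \in H1) = false.
    by move=> eG; apply: contraNF eG; apply: (subsetP h1).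
  have nH2 e : e \in G -> (e \in H2) = false.
    by move=> eG; apply: contraTF eG; apply: h2.
  rewrite /fwd_switchable /fwd_bad !G'E !inE !xpair_eqE !eqxx /=.
  rewrite ?g1 ?g3 ?n5 ?n6 ?n7 ?g8 ?g9 ?g10 ?n5' ?n6' ?n7' ?n8' ?n9' ?n10' /=.
  by rewrite !nH1 ?g1 ?g3 // !nH2.
Qed.

Lemma card_fwd_bwd_switchable x1 y1 x2 y2 :
  #|[set G in graphs_with_uv | fwd_switchable G x1 y1 x2 y2]| =
  #|[set G in graphs_without_uv | bwd_switchable G x1 y1 x2 y2]|.
Proof.
apply/eqP; rewrite eqn_leq; apply/andP; split.
  rewrite -(@card_in_imset _ _ (fun G => switch G (switch_out x1 y1 x2 y2) (switch_in x1 y1 x2 y2))).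
    apply: subset_leq_card; apply/subsetP => _ /imsetP[G /setIdP[GA Gv] ->].
    by have [h1 h2 _] := fwd_switch_spec GA Gv; rewrite inE h1 h2.
  move=> G1 G2 /setIdP[G1A G1v] /setIdP[G2A G2v] E.
  have [_ _ <-] := fwd_switch_spec G1A G1v; have [_ _ <-] := fwd_switch_spec G2A G2v.
  by rewrite E.
rewrite -(@card_in_imset _ _ (fun G => switch G (switch_in x1 y1 x2 y2) (switch_out x1 y1 x2 y2))).
  apply: subset_leq_card; apply/subsetP => _ /imsetP[G /setIdP[GB Gv] ->].
  by have [h1 h2 _] := bwd_switch_spec GB Gv; rewrite inE h1 h2.
move=> G1 G2 /setIdP[G1B G1v] /setIdP[G2B G2v] E.
have [_ _ <-] := bwd_switch_spec G1B G1v; have [_ _ <-] := bwd_switch_spec G2B G2v.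
by rewrite E.
Qed.

Let Ds := maxf s.
Let Dt := maxf t.
Let DH := Delta_H H2.
Let J1 := sumn (take (maxf s) (sorted_desc t)).
Let J2 := sumn (take (maxf t) (sorted_desc s)).

Lemma nbrU_weight_le G x : (forall x, degU G x = s x) ->
  \sum_y t y * ((x, y) \in G) <= J1.
Proof.
move=> hu.
have -> : \sum_y t y * ((x, y) \in G) = \sum_(y in [set y | (x, y) \in G]) t y.
  by rewrite sum_mem_mul; apply: eq_bigr => y _; rewrite inE mulnC.
by apply: sum_le_sumn_take_sorted_desc; rewrite -/(degU G x) hu leq_maxf.
Qed.

Lemma nbrV_weight_le G y : (forall y, degV G y = t y) ->
  \sum_x s x * ((x, y) \in G) <= J2.
Proof.
move=> hv.
have -> : \sum_x s x * ((x, y) \in G) = \sum_(x in [set x | (x, y) \in G]) s x.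
  by rewrite sum_mem_mul; apply: eq_bigr => x _; rewrite inE mulnC.
by apply: sum_le_sumn_take_sorted_desc; rewrite -/(degV G y) hv leq_maxf.
Qed.

Lemma nbrU_weight_H2 x : \sum_y t y * ((x, y) \in H2) <= Dt * DH.
Proof.
apply: (@leq_trans (\sum_y Dt * ((x, y) \in H2))).
  by apply: leq_sum => y _; rewrite leq_mul ?leq_maxf.
by rewrite -big_distrr -degUE leq_mul // (leq_trans (leq_maxf _ x)) ?leq_maxl.
Qed.

Lemma nbrV_weight_H2 y : \sum_x s x * ((x, y) \in H2) <= Ds * DH.
Proof.
apply: (@leq_trans (\sum_x Ds * ((x, y) \in H2))).
  by apply: leq_sum => x _; rewrite leq_mul ?leq_maxf.
by rewrite -big_distrr -degVE leq_mul // (leq_trans (leq_maxf _ y)) ?leq_maxr.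
Qed.

Lemma weight_H2 : \sum_(e in H2) s e.1 * t e.2 <= #|H2| * Ds * Dt.
Proof.
rewrite -mulnA -sum_nat_const; apply: leq_sum => e _.
by rewrite leq_mul ?leq_maxf.
Qed.

Definition nfwd G := \sum_(e1 : U * V) \sum_(e2 : U * V)
  (fwd_switchable G e1.1 e1.2 e2.1 e2.2 : nat).

Definition nbwd G := \sum_(e1 : U * V) \sum_(e2 : U * V)
  (bwd_switchable G e1.1 e1.2 e2.1 e2.2 : nat).

Definition fwd_defect1 G x1 y1 : nat :=
  ((u, y1) \in G) + ((u, y1) \in H2) + (x1 == u) + (y1 == v).

Definition fwd_defect2 G x1 y1 x2 y2 : nat :=
  ((x2, v) \in G) + ((x2, v) \in H2) + ((x1, y2) \in G) + (x2 == u) +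
  (x2 == x1) + (y2 == v) + (y1 == y2).

Definition bwd_defect G x1 y1 x2 y2 : nat :=
  ((x1, y1) \in G) + ((x1, y1) \in H2) + ((x2, y2) \in G) + ((x2, y2) \in H2) +
  (x1 == u) + (x2 == x1) + (y2 == v) + (y1 == y2).

(* A pair of edges of G outside H1 that is not switchable is charged to one of its bad
   events: to defect1 (which only involves the first edge), to defect2 (which
   involves both), or to the event x1y2 \in H2, which is bounded through e(H2)
   rather than through a degree. *)
Lemma fwd_switchable_lower G x1 y1 x2 y2 :
  ((x1, y1) \in G :\: H1) * ((x2, y2) \in G :\: H1) <=
  fwd_switchable G x1 y1 x2 y2
  + ((x1, y1) \in G) * ((x2, y2) \in G :\: H1) * fwd_defect1 G x1 y1
  + ((x1, y1) \in G :\: H1) * ((x2, y2) \in G) * fwd_defect2 G x1 y1 x2 y2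
  + ((x1, y1) \in G) * ((x2, y2) \in G) * ((x1, y2) \in H2).
Proof.
rewrite /fwd_switchable /fwd_bad /fwd_defect1 /fwd_defect2 !inE.
case: ((x1, y1) \in H1); case: ((x1, y1) \in G); case: ((x2, y2) \in H1);
  case: ((x2, y2) \in G); rewrite /= ?mul0n ?muln0 ?mul1n //.
have := hasN_add_sumn_ge1 [:: (u, y1) \in G; (u, y1) \in H2; (x2, v) \in G;
  (x2, v) \in H2; (x1, y2) \in G; (x1, y2) \in H2; x2 == u; x1 == u; x2 == x1;
  y1 == v; y2 == v; y1 == y2].
by rewrite /= => H; apply: leq_trans H _; apply: eq_leq; ring.
Qed.

Lemma fwd_switchable_le G x1 y1 x2 y2 :
  fwd_switchable G x1 y1 x2 y2 <= ((x1, y1) \in G :\: H1) * ((x2, y2) \in G :\: H1).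
Proof.
rewrite /fwd_switchable !inE.
by case: ((x1, y1) \in H1); case: ((x1, y1) \in G); case: ((x2, y2) \in H1);
  case: ((x2, y2) \in G); rewrite /= ?andbF ?leq_b1.
Qed.

Lemma bwd_switchable_lower G x1 y1 x2 y2 : (u, v) \notin G ->
  ((u, y1) \in G :\: H1) * ((x2, v) \in G :\: H1) * ((x1, y2) \in G :\: H1) <=
  bwd_switchable G x1 y1 x2 y2 +
  ((u, y1) \in G :\: H1) * ((x2, v) \in G :\: H1) * ((x1, y2) \in G) *
    bwd_defect G x1 y1 x2 y2.
Proof.
move=> uvG; rewrite /bwd_switchable /bwd_bad /bwd_defect !inE.
case: ((u, y1) \in H1); case E1: ((u, y1) \in G); case: ((x2, v) \in H1);
  case E2: ((x2, v) \in G); case: ((x1, y2) \in H1); case: ((x1, y2) \in G);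
  rewrite /= ?mul0n ?muln0 ?mul1n //.
have n5 : (x2 == u) = false by apply: contraTF uvG => /eqP <-; rewrite E2.
have n8 : (y1 == v) = false by apply: contraTF uvG => /eqP <-; rewrite E1.
have := hasN_add_sumn_ge1 [:: (x1, y1) \in G; (x1, y1) \in H2; (x2, y2) \in G;
  (x2, y2) \in H2; x2 == u; x1 == u; x2 == x1; y1 == v; y2 == v; y1 == y2].
rewrite n5 n8 /= => H; apply: leq_trans H _; apply: eq_leq; ring.
Qed.

Lemma bwd_switchable_le G x1 y1 x2 y2 :
  bwd_switchable G x1 y1 x2 y2 <=
  ((u, y1) \in G :\: H1) * ((x2, v) \in G :\: H1) * ((x1, y2) \in G :\: H1).
Proof.
rewrite /bwd_switchable !inE.
by case: ((u, y1) \in H1); case: ((u, y1) \in G); case: ((x2, v) \in H1);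
  case: ((x2, v) \in G); case: ((x1, y2) \in H1); case: ((x1, y2) \in G);
  rewrite /= ?andbF ?leq_b1.
Qed.

Section FixedDegrees.
Variable G : {set U * V}.
Hypothesis degU_G : forall x, degU G x = s x.
Hypothesis degV_G : forall y, degV G y = t y.

Lemma sum_fwd_defect1 :
  \sum_e1 (e1 \in G) * fwd_defect1 G e1.1 e1.2 <= J1 + Dt * DH + Ds + Dt.
Proof.
rewrite -sum_mem_mul /fwd_defect1 !big_split /=.
rewrite (sum_edges_snd G (fun y => ((u, y) \in G : nat))).
rewrite (sum_edges_snd G (fun y => ((u, y) \in H2 : nat))).
rewrite -degU_sum_edges -degV_sum_edges degU_G degV_G.
under eq_bigr do rewrite degV_G.
under [X in _ + X + _ + _]eq_bigr do rewrite degV_G.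
by rewrite !leq_add ?leq_maxf ?nbrU_weight_le ?nbrU_weight_H2.
Qed.

Lemma sum_fwd_defect2 x1 y1 :
  \sum_e2 (e2 \in G) * fwd_defect2 G x1 y1 e2.1 e2.2 <=
  J2 + Ds * DH + J1 + 2 * Ds + 2 * Dt.
Proof.
rewrite -sum_mem_mul /fwd_defect2 !big_split /=.
rewrite (sum_edges_fst G (fun x => ((x, v) \in G : nat))).
rewrite (sum_edges_fst G (fun x => ((x, v) \in H2 : nat))).
rewrite (sum_edges_snd G (fun y => ((x1, y) \in G : nat))).
under [X in X + _ + _ + _ + _ + _ + _]eq_bigr do rewrite degU_G.
under [X in _ + X + _ + _ + _ + _ + _]eq_bigr do rewrite degU_G.
under [X in _ + _ + X + _ + _ + _ + _]eq_bigr do rewrite degV_G.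
under [X in _ + _ + _ + _ + _ + _ + X]eq_bigr do rewrite eq_sym.
rewrite -!degU_sum_edges -!degV_sum_edges !degU_G !degV_G.
have := nbrV_weight_le v degV_G; have := nbrV_weight_H2 v.
have := nbrU_weight_le x1 degU_G.
have := leq_maxf s u; have := leq_maxf s x1; have := leq_maxf t v; have := leq_maxf t y1.
rewrite -/Ds -/Dt -/DH -/J1 -/J2; lia.
Qed.

Lemma sum_H2_corners : \sum_(e1 : U * V) \sum_(e2 : U * V)
  ((e1 \in G) * (e2 \in G) * ((e1.1, e2.2) \in H2)) <= #|H2| * Ds * Dt.
Proof.
apply: leq_trans weight_H2.
have -> : \sum_(e1 : U * V) \sum_(e2 : U * V) ((e1 \in G) * (e2 \in G) * ((e1.1, e2.2) \in H2))
    = \sum_(e1 in G) \sum_(e2 in G) ((e1.1, e2.2) \in H2 : nat).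
  rewrite sum_mem_mul; apply: eq_bigr => e1 _.
  by rewrite sum_mem_mul big_distrr; apply: eq_bigr => e2 _; rewrite /= mulnA.
under eq_bigr do rewrite (sum_edges_snd G (fun y => ((_, y) \in H2 : nat))).
rewrite (sum_edges_fst G (fun x => \sum_y degV G y * ((x, y) \in H2))).
rewrite sum_mem_mul sum_pairE; apply: eq_leq; apply: eq_bigr => x _.
rewrite degU_G big_distrr; apply: eq_bigr => y _ /=; rewrite degV_G.
by case: ((x, y) \in H2); rewrite ?muln0 ?muln1 ?mul1n ?mul0n.
Qed.

Lemma nfwd_lower :
  #|G :\: H1| ^ 2 <= nfwd G + #|G :\: H1| * (J1 + Dt * DH + Ds + Dt)
    + #|G :\: H1| * (J2 + Ds * DH + J1 + 2 * Ds + 2 * Dt) + #|H2| * Ds * Dt.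
Proof.
set X := G :\: H1.
have pair_lower (e1 e2 : U * V) : (e1 \in X) * (e2 \in X) <=
    fwd_switchable G e1.1 e1.2 e2.1 e2.2
    + (e1 \in G) * (e2 \in X) * fwd_defect1 G e1.1 e1.2
    + (e1 \in X) * (e2 \in G) * fwd_defect2 G e1.1 e1.2 e2.1 e2.2
    + (e1 \in G) * (e2 \in G) * ((e1.1, e2.2) \in H2).
  by case: e1 e2 => [x1 y1] [x2 y2]; apply: fwd_switchable_lower.
rewrite -mulnn {1 2}(card_sum_mem X) big_distrlr.
apply: leq_trans; first by apply: leq_sum => e1 _; apply: leq_sum => e2 _; apply: pair_lower.
under eq_bigr do rewrite !big_split.
rewrite !big_split /=.
repeat apply: leq_add; last exact: sum_H2_corners.
- by [].
- under eq_bigr do under eq_bigr do rewrite mulnAC.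
  rewrite -big_distrlr mulnC -card_sum_mem leq_mul //; exact: sum_fwd_defect1.
- apply: (@leq_trans (\sum_(e1 : U * V) (e1 \in X) * (J2 + Ds * DH + J1 + 2 * Ds + 2 * Dt))).
    apply: leq_sum => e1 _; under eq_bigr do rewrite -mulnA.
    by rewrite -big_distrr; apply: leq_mul => //; apply: sum_fwd_defect2.
  by rewrite -big_distrl -card_sum_mem.
Qed.

Lemma sum_bwd_defect y1 x2 :
  \sum_x1 \sum_y2 ((x1, y2) \in G) * bwd_defect G x1 y1 x2 y2 <=
  J2 + Ds * DH + J1 + Dt * DH + 2 * Ds + 2 * Dt.
Proof.
rewrite -(sum_pairE (fun e => ((e.1, e.2) \in G) * bwd_defect G e.1 y1 x2 e.2)).
have -> : \sum_e ((e.1, e.2) \in G) * bwd_defect G e.1 y1 x2 e.2 =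
          \sum_(e in G) bwd_defect G e.1 y1 x2 e.2.
  by rewrite sum_mem_mul; apply: eq_bigr => -[].
rewrite /bwd_defect !big_split /=.
rewrite (sum_edges_fst G (fun x => ((x, y1) \in G : nat))).
rewrite (sum_edges_fst G (fun x => ((x, y1) \in H2 : nat))).
rewrite (sum_edges_snd G (fun y => ((x2, y) \in G : nat))).
rewrite (sum_edges_snd G (fun y => ((x2, y) \in H2 : nat))).
under [X in X + _ + _ + _ + _ + _ + _ + _]eq_bigr do rewrite degU_G.
under [X in _ + X + _ + _ + _ + _ + _ + _]eq_bigr do rewrite degU_G.
under [X in _ + _ + X + _ + _ + _ + _ + _]eq_bigr do rewrite degV_G.
under [X in _ + _ + _ + X + _ + _ + _ + _]eq_bigr do rewrite degV_G.
under [X in _ + _ + _ + _ + _ + X + _ + _]eq_bigr do rewrite eq_sym.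
under [X in _ + _ + _ + _ + _ + _ + _ + X]eq_bigr do rewrite eq_sym.
rewrite -!degU_sum_edges -!degV_sum_edges !degU_G !degV_G.
have := nbrV_weight_le y1 degV_G; have := nbrV_weight_H2 y1.
have := nbrU_weight_le x2 degU_G; have := nbrU_weight_H2 x2.
have := leq_maxf s u; have := leq_maxf s x2; have := leq_maxf t v; have := leq_maxf t y1.
rewrite -/Ds -/Dt -/DH -/J1 -/J2; lia.
Qed.

Lemma nbwd_lower : (u, v) \notin G ->
  degU (G :\: H1) u * degV (G :\: H1) v * #|G :\: H1| <=
  nbwd G + degU (G :\: H1) u * degV (G :\: H1) v *
           (J2 + Ds * DH + J1 + Dt * DH + 2 * Ds + 2 * Dt).
Proof.
move=> uvG; set X := G :\: H1; set K := J2 + Ds * DH + J1 + Dt * DH + 2 * Ds + 2 * Dt.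
have bad : \sum_y1 \sum_x2 \sum_x1 \sum_y2
    (((u, y1) \in X) * ((x2, v) \in X) * ((x1, y2) \in G) * bwd_defect G x1 y1 x2 y2)
    <= degU X u * degV X v * K.
  rewrite degUE degVE big_distrlr big_distrl; apply: leq_sum => y1 _.
  rewrite big_distrl; apply: leq_sum => x2 _.
  under eq_bigr do under eq_bigr do rewrite -mulnA.
  under eq_bigr do rewrite -big_distrr.
  by rewrite -big_distrr; apply: leq_mul => //; apply: sum_bwd_defect.
rewrite degU_degV_card /nbwd (sum_pairs_reorder (fun x1 y1 x2 y2 =>
  (bwd_switchable G x1 y1 x2 y2 : nat))).
apply: leq_trans (leq_add (leqnn _) bad).
rewrite -!big_split /=; apply: leq_sum => y1 _.
rewrite -big_split; apply: leq_sum => x2 _.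
rewrite -big_split; apply: leq_sum => x1 _.
rewrite -big_split; apply: leq_sum => y2 _.
exact: bwd_switchable_lower.
Qed.

End FixedDegrees.

Lemma nfwd_upper G : nfwd G <= #|G :\: H1| * #|G :\: H1|.
Proof.
rewrite card_sum_mem big_distrlr; apply: leq_sum => -[x1 y1] _.
by apply: leq_sum => -[x2 y2] _; apply: fwd_switchable_le.
Qed.

Lemma nbwd_upper G : nbwd G <= degU (G :\: H1) u * degV (G :\: H1) v * #|G :\: H1|.
Proof.
rewrite degU_degV_card /nbwd (sum_pairs_reorder (fun x1 y1 x2 y2 =>
  (bwd_switchable G x1 y1 x2 y2 : nat))).
do 4!(apply: leq_sum => ? _); exact: bwd_switchable_le.
Qed.

Let m := Msum s - #|H1|.
Let a := s u - degU H1 u.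
Let b := t v - degV H1 v.
Let Ef := m * (J1 + Dt * DH + Ds + Dt) + m * (J2 + Ds * DH + J1 + 2 * Ds + 2 * Dt)
          + #|H2| * Ds * Dt.
Let Kb := J2 + Ds * DH + J1 + Dt * DH + 2 * Ds + 2 * Dt.
Let X := Jd s t + Delta_d s t * (1 + Delta_H H2) + a * b.
Let Y := #|H2| * maxf s * maxf t.

Lemma card_free_edges G : G \in cond_space s t H1 H2 -> #|G :\: H1| = m.
Proof.
move=> /cond_spaceP[hu _ h1 _].
rewrite cardsD (setIidPr h1) card_edges /m /Msum.
by under eq_bigr do rewrite hu.
Qed.

Lemma degU_free G x : G \in cond_space s t H1 H2 -> degU (G :\: H1) x = s x - degU H1 x.
Proof. by move=> /cond_spaceP[hu _ h1 _]; rewrite degU_setD // hu. Qed.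

Lemma degV_free G y : G \in cond_space s t H1 H2 -> degV (G :\: H1) y = t y - degV H1 y.
Proof. by move=> /cond_spaceP[_ hv h1 _]; rewrite degV_setD // hv. Qed.

Lemma sum_nfwd_nbwd :
  \sum_(G in graphs_with_uv) nfwd G = \sum_(G in graphs_without_uv) nbwd G.
Proof.
rewrite /nfwd /nbwd exchange_big [RHS]exchange_big; apply: eq_bigr => e1 _.
rewrite exchange_big [RHS]exchange_big; apply: eq_bigr => e2 _.
rewrite -!(card_sep_sum _ (fun G => fwd_switchable G e1.1 e1.2 e2.1 e2.2)).
rewrite -!(card_sep_sum _ (fun G => bwd_switchable G e1.1 e1.2 e2.1 e2.2)).
exact: card_fwd_bwd_switchable.
Qed.

Lemma double_count_fwd : #|graphs_with_uv| * (m * m) <=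
  #|graphs_without_uv| * (a * b * m) + #|graphs_with_uv| * Ef.
Proof.
apply: (@leq_trans (\sum_(G in graphs_with_uv) (nfwd G + Ef))).
  rewrite -sum_nat_const; apply: leq_sum => G /setIdP[GO _].
  have [hu hv _ _] := cond_spaceP GO.
  by have := nfwd_lower hu hv; rewrite (card_free_edges GO) -mulnn /Ef; lia.
rewrite big_split /= sum_nat_const sum_nfwd_nbwd leq_add2r.
rewrite -sum_nat_const; apply: leq_sum => G /setIdP[GO _].
by have := nbwd_upper G; rewrite (degU_free _ GO) (degV_free _ GO) (card_free_edges GO).
Qed.

Lemma double_count_bwd : #|graphs_without_uv| * (a * b * m) <=
  #|graphs_with_uv| * (m * m) + #|graphs_without_uv| * (a * b * Kb).
Proof.
apply: (@leq_trans (\sum_(G in graphs_without_uv) (nbwd G + a * b * Kb))).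
  rewrite -sum_nat_const; apply: leq_sum => G /setIdP[GO uvG].
  have [hu hv _ _] := cond_spaceP GO.
  have := nbwd_lower hu hv uvG.
  by rewrite (degU_free _ GO) (degV_free _ GO) (card_free_edges GO).
rewrite big_split /= sum_nat_const -sum_nfwd_nbwd leq_add2r.
rewrite -sum_nat_const; apply: leq_sum => G /setIdP[GO _].
by have := nfwd_upper G; rewrite (card_free_edges GO).
Qed.

Lemma fwd_error_le : Ef <= 6 * (m * X + Y).
Proof.
have hs : Ds <= Delta_d s t by apply: leq_maxl.
have ht : Dt <= Delta_d s t by apply: leq_maxr.
have h1 : Ds * DH <= Delta_d s t * DH by apply: leq_mul.
have h2 : Dt * DH <= Delta_d s t * DH by apply: leq_mul.
have hK : J1 + Dt * DH + Ds + Dt + (J2 + Ds * DH + J1 + 2 * Ds + 2 * Dt) <= 6 * X.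
  rewrite /X /Jd -/J1 -/J2 -/DH; lia.
have := leq_mul (leqnn m) hK.
rewrite /Ef /Y -/Ds -/Dt; lia.
Qed.

Lemma bwd_error_le : Kb <= 4 * X.
Proof.
have hs : Ds <= Delta_d s t by apply: leq_maxl.
have ht : Dt <= Delta_d s t by apply: leq_maxr.
have h1 : Ds * DH <= Delta_d s t * DH by apply: leq_mul.
have h2 : Dt * DH <= Delta_d s t * DH by apply: leq_mul.
rewrite /Kb /X /Jd -/J1 -/J2 -/DH; lia.
Qed.

Lemma cond_prob_estimate (R : realType) :
  (#|H1| < Msum s)%N -> (0 < #|cond_space s t H1 H2|)%N ->
  (xi R s t H1 H2 u v <= 1 / 12)%R ->
  (`| cond_prob R s t H1 H2 u v - main_term R s t H1 u v |
     <= 12 * xi R s t H1 H2 u v * main_term R s t H1 u v)%R.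
Proof.
move=> hm hnonempty hxi.
have m_gt0 : (0 < m)%N by rewrite /m subn_gt0.
have hcard := card_sepUsepN (cond_space s t H1 H2) (fun G => (u, v) \in G).
move: hxi; rewrite /cond_prob /main_term /xi hcard natrX expr2 -/m -/X -/Y -/a -/b => hxi.
rewrite natrD; apply: (@ratio_estimate R _ _ _ _ Ef%:R Kb%:R) => //.
- by rewrite -natrD ltr0n -hcard.
- by rewrite ltr0n.
- by rewrite -!natrM -natrD ler_nat; exact: double_count_fwd.
- by rewrite -!natrM -natrD ler_nat; exact: double_count_bwd.
- by rewrite -[6%R]/(6%:R)%R -!natrM -natrD -natrM ler_nat; exact: fwd_error_le.
- by rewrite -[4%R]/(4%:R)%R -natrM ler_nat; exact: bwd_error_le.
- by rewrite ler_nat /X leq_addl.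
Qed.

End Switching.

Local Open Scope ring_scope.

Theorem mainTheorem17 (R : realType) :
  exists eps C : R, 0 < eps /\ 0 <= C /\
  forall (U V : finType) (s : U -> nat) (t : V -> nat) (H1 H2 : {set U * V})
         (u : U) (v : V),
    Msum s = (\sum_(w : V) t w)%N ->
    H1 :&: H2 = set0 ->
    (forall x : U, (degU H1 x <= s x)%N) ->
    (forall y : V, (degV H1 y <= t y)%N) ->
    (u, v) \notin H1 -> (u, v) \notin H2 ->
    (#|H1| < Msum s)%N ->
    (0 < #|cond_space s t H1 H2|)%N ->
    xi R s t H1 H2 u v <= eps ->
    `| cond_prob R s t H1 H2 u v - main_term R s t H1 u v |
      <= C * xi R s t H1 H2 u v * main_term R s t H1 u v.
Proof.
exists (1 / 12), 12; split; first by rewrite mul1r invr_gt0 ltr0n.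
split; first by rewrite ler0n.
move=> U V s t H1 H2 u v _ _ _ _ huv1 huv2 hm hnonempty hxi.
exact: (cond_prob_estimate huv1 huv2 (R := R) hm hnonempty hxi).
Qed.
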